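(* Suppose the following holds: for every separable Hilbert space $\mathcal{H}'$ and every pair of orthogonal projections $P', Q'$ on $\mathcal{H}'$ with $\mathcal{K}_{P',Q'} = \mathcal{K}_{1-P',1-Q'} = \{0\}$, there exists a unitary $W$ on $\mathcal{H}'$ with $W P' W^{-1} = Q'$ and $W Q' W^{-1} = P'$. Then for every separable Hilbert space $\mathcal{H}$ and every pair of orthogonal projections $P, Q$ on $\mathcal{H}$, there exists a unitary $U$ on $\mathcal{H}$ with $U P U^{-1} = Q$ and $U Q U^{-1} = P$ if and only if $\dim(\mathcal{K}_{P,Q}) = \dim(\mathcal{K}_{1-P,1-Q})$ (where the dimensions, possibly infinite, are compared as Hilbert space dimensions).
   Context: For orthogonal projections $R, S$ on a Hilbert space, $\mathcal{K}_{R,S} := \operatorname{ran} R \cap \ker S$. Thus $\mathcal{K}_{P,Q} = \operatorname{ran} P \cap \ker Q$ and $\mathcal{K}_{1-P,1-Q} = \ker P \cap \operatorname{ran} Q$. The paper phrases this as: ''To prove the theorem (existence of such a unitary iff the dimensions agree), it suffices to prove it in the case $\mathcal{K}_{P,Q} = \mathcal{K}_{1-P,1-Q} = \{0\}$.'' *)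

From mathcomp Require Import all_boot all_order all_algebra.
From mathcomp Require Import reals.
From mathcomp Require Import boolp classical_sets cardinality.
From mathcomp.real_closed Require Import complex.
Set Implicit Arguments. Unset Strict Implicit. Unset Printing Implicit Defensive.
Import Order.TTheory GRing.Theory Num.Theory.
Local Open Scope ring_scope.
Local Open Scope classical_set_scope.

Section Hilbert.
Variable R : realType.
Local Notation C := (R[i]).
Variables (V : lmodType C) (ip : V -> V -> C).

Definition inner_product : Prop :=
  [/\ (forall (a : C) (x y z : V), ip (a *: x + y) z = a * ip x z + ip y z),
      (forall x y : V, ip y x = (ip x y)^*),
      (forall x : V, 0 <= ip x x) &
      (forall x : V, ip x x = 0 -> x = 0)].

Definition hnorm (x : V) : R := Num.sqrt (complex.Re (ip x x)).

Definition hcauchy (u : nat -> V) : Prop :=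
  forall e : R, 0 < e -> exists N : nat,
    forall m n : nat, (N <= m)%N -> (N <= n)%N -> hnorm (u m - u n) < e.

Definition hconverges (u : nat -> V) (l : V) : Prop :=
  forall e : R, 0 < e -> exists N : nat,
    forall n : nat, (N <= n)%N -> hnorm (u n - l) < e.

Definition hcomplete : Prop :=
  forall u : nat -> V, hcauchy u -> exists l : V, hconverges u l.

Definition hseparable : Prop :=
  exists d : nat -> V, forall (x : V) (e : R), 0 < e ->
    exists n : nat, hnorm (x - d n) < e.

Definition separable_hilbert_space : Prop :=
  [/\ inner_product, hcomplete & hseparable].

Definition bounded_linear (T : V -> V) : Prop :=
  linear T /\ exists c : R, forall x : V, hnorm (T x) <= c * hnorm x.

Definition orth_proj (P : V -> V) : Prop :=
  [/\ bounded_linear P,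
      (forall x : V, P (P x) = P x) &
      (forall x y : V, ip (P x) y = ip x (P y))].

Definition unitary_with_inverse (U Uinv : V -> V) : Prop :=
  [/\ bounded_linear U,
      (forall x y : V, ip (U x) (U y) = ip x y),
      cancel U Uinv & cancel Uinv U].

Definition compl_op (P : V -> V) : V -> V := fun x => x - P x.

Definition Ksub (A B : V -> V) : set V :=
  [set x | (exists y, A y = x) /\ B x = 0].

Definition orthonormal_basis (K B : set V) : Prop :=
  [/\ B `<=` K,
      (forall b, B b -> ip b b = 1),
      (forall b b', B b -> B b' -> b <> b' -> ip b b' = 0) &
      (forall x, K x -> (forall b, B b -> ip x b = 0) -> x = 0)].

Definition same_hilbert_dim (K1 K2 : set V) : Prop :=
  exists B1 B2 : set V,
    [/\ orthonormal_basis K1 B1, orthonormal_basis K2 B2 & (B1 #= B2)%card].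

Definition unitarily_swappable (P Q : V -> V) : Prop :=
  exists U Uinv : V -> V,
    [/\ unitary_with_inverse U Uinv,
        (forall x, U (P (Uinv x)) = Q x) &
        (forall x, U (Q (Uinv x)) = P x)].

End Hilbert.

(* A unitary U with U P U^-1 = Q and U Q U^-1 = P maps ran P ∩ ker Q
   isometrically onto ker P ∩ ran Q, hence carries an orthonormal basis of the
   first space onto one of the second.
   Conversely, a bijection between orthonormal bases of K10 = ran P ∩ ker Q and
   K01 = ker P ∩ ran Q yields, through Fourier series, a partial isometry T from
   K10 onto K01. Let pF be the orthogonal projection onto
   F = K10 ⊕ K01 ⊕ (ran P ∩ ran Q), and S = T + T^* + (identity on ran P ∩ ran Q):
   S is a self-adjoint unitary of F with S P S = Q on F. Replacing P and Q by the
   identity on F gives projections with trivial K-spaces, which by hypothesis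
   are swapped by a unitary W. As F is their common fixed space, W preserves F
   and its orthogonal complement, and W on F^⊥ glued with S on F swaps P and Q.
   Orthonormal bases exist by Zorn's lemma and are countable by separability;
   the Fourier series converge by Bessel's inequality and completeness. *)

From HB Require Import structures.
From mathcomp Require Import all_boot all_order all_algebra.
From mathcomp Require Import reals.
From mathcomp Require Import boolp classical_sets cardinality functions.
From mathcomp.real_closed Require Import complex.
From mathcomp Require Import ring lra.
Set Implicit Arguments. Unset Strict Implicit. Unset Printing Implicit Defensive.
Import Order.TTheory GRing.Theory Num.Theory ComplexField.Normc.
Local Open Scope complex_scope.
Local Open Scope ring_scope.
Local Open Scope classical_set_scope.

Section ComplexNorm.
Variable R : realType.
Implicit Types a b : R[i].

Lemma normcE a : `|a| = (normc a)%:C.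
Proof. by case: a. Qed.

Lemma normc_ge0 a : 0 <= normc a.
Proof. by rewrite -lecR -normcE normr_ge0. Qed.

Lemma Re_le_normc a : complex.Re a <= normc a.
Proof.
rewrite -lecR -normcE; apply: le_trans (normc_ge_Re a).
by rewrite lecR real_ler_norm ?num_real.
Qed.

Lemma normc_sqr a : (normc a ^+ 2)%:C = a * a^*.
Proof. by rewrite -normCK normcE -rmorphXn. Qed.

(* Restatements of [rmorphM] and [rmorph_sum] with plain [%:C] terms on the
   right, so that they can be rewritten from right to left. *)
Lemma realcM (r s : R) : (r * s)%:C = r%:C * s%:C :> R[i].
Proof. exact: rmorphM. Qed.

Lemma realc_sum I (r : seq I) (P : pred I) (F : I -> R) :
  (\sum_(i <- r | P i) F i)%:C = \sum_(i <- r | P i) (F i)%:C :> R[i].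
Proof. exact: rmorph_sum. Qed.

Lemma conj_real (r : R) : (r%:C)^* = r%:C :> R[i].
Proof. by apply: conj_Creal; apply/complex_realP; exists r. Qed.

End ComplexNorm.

Section Linear.
Variables (K : pzRingType) (V : lmodType K) (T : V -> V).
Hypothesis lT : linear T.

Lemma lin0 : T 0 = 0.
Proof.
by have := lT 1 0 0; rewrite scaler0 addr0 scale1r -{1}[T 0]addr0 => /addrI.
Qed.
Lemma linD x y : T (x + y) = T x + T y.
Proof. by have := lT 1 x y; rewrite !scale1r. Qed.
Lemma linZ a x : T (a *: x) = a *: T x.
Proof. by have := lT a x 0; rewrite !addr0 lin0 addr0. Qed.
Lemma linN x : T (- x) = - T x.
Proof. by rewrite -scaleN1r linZ scaleN1r. Qed.
Lemma linB x y : T (x - y) = T x - T y.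
Proof. by rewrite linD linN. Qed.

End Linear.

Lemma linear_add (K : pzRingType) (V : lmodType K) (T1 T2 : V -> V) :
  linear T1 -> linear T2 -> linear (fun x => T1 x + T2 x).
Proof. by move=> l1 l2 a x y; rewrite l1 l2 scalerDr addrACA. Qed.

Lemma linear_comp (K : pzRingType) (V : lmodType K) (T1 T2 : V -> V) :
  linear T1 -> linear T2 -> linear (T1 \o T2).
Proof. by move=> l1 l2 a x y /=; rewrite l2 l1. Qed.

Section InnerProduct.
Variables (R : realType) (V : lmodType R[i]) (ip : V -> V -> R[i]).
Hypothesis hip : inner_product ip.
Local Notation hn := (hnorm ip).
Implicit Types x y z : V.

Lemma ipC x y : ip y x = (ip x y)^*.
Proof. by case: hip. Qed.
Lemma ip_ge0 x : 0 <= ip x x.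
Proof. by case: hip. Qed.
Lemma ip_eq0 x : ip x x = 0 -> x = 0.
Proof. by case: hip => _ _ _; apply. Qed.

Lemma ip0l z : ip 0 z = 0.
Proof.
case: hip => /(_ 1 0 0 z); rewrite scaler0 addr0 mul1r => h _ _ _.
by apply: (@addrI _ (ip 0 z)); rewrite -h addr0.
Qed.
Lemma ipDl x y z : ip (x + y) z = ip x z + ip y z.
Proof. by case: hip => /(_ 1 x y z); rewrite scale1r mul1r. Qed.
Lemma ipZl a x z : ip (a *: x) z = a * ip x z.
Proof. by case: hip => /(_ a x 0 z); rewrite addr0 ip0l addr0. Qed.
Lemma ipNl x z : ip (- x) z = - ip x z.
Proof. by rewrite -scaleN1r ipZl mulN1r. Qed.
Lemma ipBl x y z : ip (x - y) z = ip x z - ip y z.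
Proof. by rewrite ipDl ipNl. Qed.
Lemma ip0r z : ip z 0 = 0.
Proof. by rewrite ipC ip0l conjC0. Qed.
Lemma ipDr x y z : ip z (x + y) = ip z x + ip z y.
Proof. by rewrite ipC ipDl rmorphD [ip z x]ipC [ip z y]ipC. Qed.
Lemma ipZr a x z : ip z (a *: x) = a^* * ip z x.
Proof. by rewrite ipC ipZl rmorphM [ip z x]ipC. Qed.
Lemma ipNr x z : ip z (- x) = - ip z x.
Proof. by rewrite ipC ipNl rmorphN [ip z x]ipC. Qed.
Lemma ipBr x y z : ip z (x - y) = ip z x - ip z y.
Proof. by rewrite ipDr ipNr. Qed.

Lemma ip_suml I (r : seq I) (P : pred I) (F : I -> V) z :
  ip (\sum_(i <- r | P i) F i) z = \sum_(i <- r | P i) ip (F i) z.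
Proof. by apply: (big_morph (ip^~ z)); [move=> *; exact: ipDl | exact: ip0l]. Qed.
Lemma ip_sumr I (r : seq I) (P : pred I) (F : I -> V) z :
  ip z (\sum_(i <- r | P i) F i) = \sum_(i <- r | P i) ip z (F i).
Proof. by apply: (big_morph (ip z)); [move=> *; exact: ipDr | exact: ip0r]. Qed.

Lemma ipl_inj x y : (forall z, ip x z = ip y z) -> x = y.
Proof.
by move=> h; apply/subr0_eq/ip_eq0; rewrite ipBl h subrr.
Qed.

Lemma ip_hnorm x : ip x x = (hn x ^+ 2)%:C.
Proof.
have re : ip x x = (complex.Re (ip x x))%:C by rewrite RRe_real ?ger0_real ?ip_ge0.
by rewrite /hnorm sqr_sqrtr -?re // -lecR -re ip_ge0.
Qed.

Lemma hnorm_ge0 x : 0 <= hn x.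
Proof. exact: sqrtr_ge0. Qed.
Lemma hnorm0 : hn 0 = 0.
Proof. by rewrite /hnorm ip0l sqrtr0. Qed.
Lemma hnorm0_eq0 x : hn x = 0 -> x = 0.
Proof. by move=> h; apply: ip_eq0; rewrite ip_hnorm h expr0n. Qed.

Lemma cauchy_schwarz x y : normc (ip x y) <= hn x * hn y.
Proof.
rewrite -(@ler_pXn2r _ 2) ?nnegrE ?normc_ge0 ?mulr_ge0 ?hnorm_ge0 //.
rewrite -lecR normc_sqr exprMn realcM -!ip_hnorm.
have [->|y0] := eqVneq y 0; first by rewrite !ip0r mul0r mulr0.
set c := ip x y; set r := ip y y.
have r_gt0 : 0 < r by rewrite lt_def ip_ge0 andbT; apply: contra_neq y0 => /ip_eq0.
have rJ : r^* = r by rewrite /r ip_hnorm conj_real.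
have := ip_ge0 (r *: x - c *: y).
rewrite ipBl !ipBr !ipZl !ipZr -/r -/c [ip y x]ipC -/c rJ.
have -> : r * (r * ip x x) - r * (c^* * c) - (c * (r * c^*) - c * (c^* * r))
   = r * (ip x x * r - c * c^*) by ring.
by rewrite pmulr_rge0 // subr_ge0.
Qed.

Lemma Re_ip_le x y : complex.Re (ip x y) <= hn x * hn y.
Proof. exact: le_trans (Re_le_normc _) (cauchy_schwarz x y). Qed.

Lemma hnorm_sqr x : hn x ^+ 2 = complex.Re (ip x x).
Proof. by rewrite ip_hnorm. Qed.

Lemma hnormD_sqr x y :
  hn (x + y) ^+ 2 = hn x ^+ 2 + hn y ^+ 2 + complex.Re (ip x y) *+ 2.
Proof.
rewrite !hnorm_sqr ipDl !ipDr [ip y x]ipC.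
by case: (ip x x) (ip x y) (ip y y) => [a b] [c d] [e f] /=; lra.
Qed.

Lemma ler_hnormD x y : hn (x + y) <= hn x + hn y.
Proof.
rewrite -(@ler_pXn2r _ 2) ?nnegrE ?addr_ge0 ?hnorm_ge0 // hnormD_sqr sqrrD.
by have := Re_ip_le x y; lra.
Qed.

Lemma hnormZ a x : hn (a *: x) = normc a * hn x.
Proof.
apply/eqP; rewrite -(@eqrXn2 _ 2) ?mulr_ge0 ?normc_ge0 ?hnorm_ge0 //.
apply/eqP/complexI; rewrite -ip_hnorm exprMn realcM normc_sqr -ip_hnorm.
by rewrite ipZl ipZr mulrA.
Qed.

Lemma hnormN x : hn (- x) = hn x.
Proof. by rewrite /hnorm ipNl ipNr opprK. Qed.

Lemma hdistC x y : hn (x - y) = hn (y - x).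
Proof. by rewrite -hnormN opprB. Qed.

Lemma ler_hdistD x y z : hn (x - z) <= hn (x - y) + hn (y - z).
Proof. by have := ler_hnormD (x - y) (y - z); rewrite addrA subrK. Qed.

End InnerProduct.

Section Convergence.
Variables (R : realType) (V : lmodType R[i]) (ip : V -> V -> R[i]).
Hypothesis hip : inner_product ip.
Local Notation hn := (hnorm ip).
Local Notation "u --> l" := (hconverges ip u l) (at level 70).
Implicit Types (u v : nat -> V) (x y l m : V).

Lemma hcvg_mulr_lt u l c : 0 <= c -> u --> l ->
  forall e, 0 < e -> exists N, forall n, (N <= n)%N -> hn (u n - l) * c < e.
Proof.
move=> c_ge0 hu e e_gt0; have c1_gt0 : 0 < c + 1 by lra.
have [N hN] := hu _ (divr_gt0 e_gt0 c1_gt0); exists N => n /hN lt_un.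
apply: le_lt_trans (_ : hn (u n - l) * (c + 1) < e); last by rewrite -ltr_pdivlMr.
by rewrite ler_wpM2l ?hnorm_ge0 // lerDl.
Qed.

Lemma hcvg_unique u l m : u --> l -> u --> m -> l = m.
Proof.
move=> hl hm; apply/subr0_eq/(hnorm0_eq0 hip)/eqP.
rewrite eq_le hnorm_ge0 andbT; apply/ler_addgt0Pr => e e_gt0; rewrite add0r.
have e2_gt0 : 0 < e / 2 by rewrite divr_gt0.
have [N1 hN1] := hl _ e2_gt0; have [N2 hN2] := hm _ e2_gt0.
have := hN1 _ (leq_maxl N1 N2); have := hN2 _ (leq_maxr N1 N2).
have := ler_hdistD hip l (u (maxn N1 N2)) m; rewrite (hdistC hip l (u _)); lra.
Qed.

Lemma hcvg_eventually u l N : (forall n, (N <= n)%N -> u n = l) -> u --> l.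
Proof. by move=> h e e_gt0; exists N => n /h ->; rewrite subrr hnorm0. Qed.

Lemma hcvg_ext u v l : u =1 v -> u --> l -> v --> l.
Proof. by move=> h hu e /hu[N hN]; exists N => n; rewrite -h; apply: hN. Qed.

Lemma hcvgD u v l m : u --> l -> v --> m -> (fun n => u n + v n) --> l + m.
Proof.
move=> hu hv e e_gt0; have e2_gt0 : 0 < e / 2 by rewrite divr_gt0.
have [N1 hN1] := hu _ e2_gt0; have [N2 hN2] := hv _ e2_gt0.
exists (maxn N1 N2) => n; rewrite geq_max => /andP[/hN1 + /hN2].
have := ler_hnormD hip (u n - l) (v n - m); rewrite addrACA -opprD; lra.
Qed.

Lemma hcvgZ a u l : u --> l -> (fun n => a *: u n) --> a *: l.
Proof.
move=> hu e /(hcvg_mulr_lt (normc_ge0 a) hu)[N hN].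
by exists N => n /hN; rewrite -scalerBr (hnormZ hip) mulrC.
Qed.

Lemma hcvg_bounded_linear T u l :
  bounded_linear ip T -> u --> l -> (fun n => T (u n)) --> T l.
Proof.
move=> [lT [c hc]] hu e /(hcvg_mulr_lt (normr_ge0 c) hu)[N hN].
exists N => n /hN lt_un; rewrite -linB //; apply: le_lt_trans (hc _) _.
by apply: le_lt_trans lt_un; rewrite mulrC ler_wpM2l ?hnorm_ge0 ?ler_norm.
Qed.

Lemma ip_hcvg_eq u v l m x y : u --> l -> v --> m ->
  (forall n, ip (u n) y = ip x (v n)) -> ip l y = ip x m.
Proof.
move=> hu hv h; apply/subr0_eq/eq0_normc/eqP.
rewrite eq_le normc_ge0 andbT; apply/ler_addgt0Pr => e e_gt0; rewrite add0r.
have e2_gt0 : 0 < e / 2 by rewrite divr_gt0.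
have [N1 hN1] := hcvg_mulr_lt (hnorm_ge0 ip y) hu e2_gt0.
have [N2 hN2] := hcvg_mulr_lt (hnorm_ge0 ip x) hv e2_gt0.
set n := maxn N1 N2; have := hN1 n (leq_maxl _ _); have := hN2 n (leq_maxr _ _).
have -> : ip l y - ip x m = ip x (v n - m) - ip (u n - l) y.
  by rewrite (ipBl hip) (ipBr hip) h; ring.
have := le_normcD (ip x (v n - m)) (- ip (u n - l) y); rewrite normcN.
have := cauchy_schwarz hip x (v n - m); have := cauchy_schwarz hip (u n - l) y.
lra.
Qed.

Definition hclosed (K : set V) :=
  forall u l, (forall n, K (u n)) -> u --> l -> K l.

Definition subspace (K : set V) :=
  [/\ K 0, (forall x y, K x -> K y -> K (x + y)) &
      (forall a x, K x -> K (a *: x))].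

Lemma subspace_sum (K : set V) I (r : seq I) (F : I -> V) :
  subspace K -> (forall i, K (F i)) -> K (\sum_(i <- r) F i).
Proof.
move=> [K0 KD _] KF; elim: r => [|i r IHr]; first by rewrite big_nil.
by rewrite big_cons; apply: KD.
Qed.

Lemma subspaceB (K : set V) x y : subspace K -> K x -> K y -> K (x - y).
Proof. by move=> [_ KD KZ] Kx Ky; rewrite -scaleN1r; apply: KD => //; apply: KZ. Qed.

Lemma subspaceI (K1 K2 : set V) :
  subspace K1 -> subspace K2 -> subspace (K1 `&` K2).
Proof.
move=> [a1 b1 c1] [a2 b2 c2]; split => //.
- by move=> x y [? ?] [? ?]; split; [apply: b1 | apply: b2].
- by move=> a x [? ?]; split; [apply: c1 | apply: c2].
Qed.

Lemma hclosedI (K1 K2 : set V) : hclosed K1 -> hclosed K2 -> hclosed (K1 `&` K2).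
Proof.
by move=> h1 h2 u l hK hu; split; [apply: h1 hu | apply: h2 hu] => n; case: (hK n).
Qed.

Lemma subspace_eq (T1 T2 : V -> V) :
  linear T1 -> linear T2 -> subspace [set x | T1 x = T2 x].
Proof.
move=> l1 l2; split => /= [|x y e1 e2|a x e1]; first by rewrite !lin0.
  by rewrite !linD // e1 e2.
by rewrite !linZ // e1.
Qed.

Lemma hclosed_eq (T1 T2 : V -> V) :
  bounded_linear ip T1 -> bounded_linear ip T2 -> hclosed [set x | T1 x = T2 x].
Proof.
move=> b1 b2 u l hK hu; apply: hcvg_unique (hcvg_bounded_linear b1 hu) _.
by apply: hcvg_ext (hcvg_bounded_linear b2 hu) => n; rewrite hK.
Qed.

Lemma bounded_linear_id : bounded_linear ip id.
Proof. by split=> //; exists 1 => x; rewrite mul1r. Qed.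

Lemma bounded_linear0 : bounded_linear ip (fun=> 0).
Proof.
by split=> [a x y|]; [rewrite scaler0 addr0 | exists 0 => x; rewrite mul0r hnorm0].
Qed.

End Convergence.

Lemma nondecreasing_bounded_tail (R : realType) (s : nat -> R) (B : R) :
  (forall n, s n <= B) -> {homo s : n m / (n <= m)%N >-> n <= m} ->
  forall e, 0 < e -> exists N, forall m, s m - s N < e.
Proof.
move=> sB s_nd e e_gt0.
have s_sup : has_sup (range s) by split; [exists (s 0%N), 0%N | exists B => _ [n _ <-]].
have [_ [N _ <-] ltN] := sup_adherent e_gt0 s_sup.
exists N => m; suff : s m <= sup (range s) by lra.
by apply: sup_upper_bound => //; exists m.
Qed.

Section Fourier.
Variables (R : realType) (V : lmodType R[i]) (ip : V -> V -> R[i]).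
Hypothesis hip : inner_product ip.
Local Notation hn := (hnorm ip).
Local Notation "u --> l" := (hconverges ip u l) (at level 70).

(* Zero terms are allowed, so that every orthonormal basis of a separable
   space, finite or not, is enumerated by a single sequence. *)
Definition orthonormal_seq (e : nat -> V) :=
  (forall n, e n != 0 -> ip (e n) (e n) = 1) /\
  (forall n m, n != m -> ip (e n) (e m) = 0).

Definition fourier_sum (e u : nat -> V) (x : V) (N : nat) : V :=
  \sum_(0 <= i < N) ip x (e i) *: u i.

Section OrthonormalSeq.
Variable e : nat -> V.
Hypothesis oe : orthonormal_seq e.

Lemma hnorm_orthonormal_le1 n : hn (e n) <= 1.
Proof.
have [->|/(proj1 oe) ee1] := eqVneq (e n) 0; first by rewrite (hnorm0 hip).
by rewrite /hnorm ee1 sqrtr1.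
Qed.

Lemma ip_coef_orthonormal x n : ip x (e n) * ip (e n) (e n) = ip x (e n).
Proof.
by have [->|/(proj1 oe)->] := eqVneq (e n) 0; rewrite ?(ip0r hip) ?mul0r ?mulr1.
Qed.

Lemma ip_sum_orthonormal (c d : nat -> R[i]) (s : seq nat) : uniq s ->
  ip (\sum_(i <- s) c i *: e i) (\sum_(i <- s) d i *: e i)
  = \sum_(i <- s) c i * (d i)^* * ip (e i) (e i).
Proof.
move=> s_uniq; rewrite (ip_suml hip); apply: eq_big_seq => i si.
rewrite (ipZl hip) (ip_sumr hip) (bigD1_seq i) //= big1 ?addr0.
  by rewrite (ipZr hip) !mulrA.
by move=> j ji; rewrite (ipZr hip) (proj2 oe) ?mulr0 // eq_sym.
Qed.

Lemma hnorm_sum_orthonormal (c : nat -> R[i]) (s : seq nat) : uniq s ->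
  hn (\sum_(i <- s) c i *: e i) ^+ 2 = \sum_(i <- s) normc (c i) ^+ 2 * hn (e i) ^+ 2.
Proof.
move=> s_uniq; rewrite (hnorm_sqr hip) ip_sum_orthonormal // raddf_sum.
by apply: eq_bigr => i _; rewrite (ip_hnorm hip) -normc_sqr -realcM.
Qed.

Lemma bessel x N : \sum_(0 <= i < N) normc (ip x (e i)) ^+ 2 <= hn x ^+ 2.
Proof.
set w := \sum_(0 <= i < N) _; set s := fourier_sum e e x N.
have sx : ip s x = w%:C.
  rewrite realc_sum (ip_suml hip); apply: eq_bigr => i _.
  by rewrite (ipZl hip) [ip (e i) x](ipC hip) normc_sqr.
have ss : ip s s = w%:C.
  rewrite ip_sum_orthonormal ?iota_uniq // realc_sum; apply: eq_bigr => i _.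
  by rewrite mulrAC ip_coef_orthonormal normc_sqr.
have xs : ip x s = w%:C by rewrite (ipC hip) sx conj_real.
have := sqr_ge0 (hn (x - s)).
rewrite [hn (x - s) ^+ 2](hnorm_sqr hip) (ipBl hip) !(ipBr hip) sx xs ss.
by rewrite subrr subr0 raddfB /= -(hnorm_sqr hip) subr_ge0.
Qed.

End OrthonormalSeq.

Section FourierSum.
Variables e u : nat -> V.
Hypotheses (oe : orthonormal_seq e) (ou : orthonormal_seq u).

Lemma hnorm_fourier_sumB x n m : (n <= m)%N ->
  hn (fourier_sum e u x m - fourier_sum e u x n) ^+ 2
  <= \sum_(0 <= i < m) normc (ip x (e i)) ^+ 2
     - \sum_(0 <= i < n) normc (ip x (e i)) ^+ 2.
Proof.
move=> le_nm; have addKB (G : zmodType) (a b : G) : a + b - a = b by rewrite addrC addKr.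
rewrite /fourier_sum !(@big_cat_nat _ _ _ n 0 m) //= !addKB.
rewrite hnorm_sum_orthonormal ?iota_uniq // ler_sum // => i _.
by rewrite ler_piMr ?sqr_ge0 // expr_le1 ?hnorm_ge0 ?hnorm_orthonormal_le1.
Qed.

Lemma fourier_sum_cauchy x : hcauchy ip (fourier_sum e u x).
Proof.
move=> eps eps_gt0.
have [|N hN] := nondecreasing_bounded_tail (bessel oe x) _ (exprn_gt0 2 eps_gt0).
  move=> n m le_nm; rewrite (@big_cat_nat _ _ _ n 0 m) //= lerDl.
  by apply: sumr_ge0 => i _; exact: sqr_ge0.
suff tail_lt n m : (N <= n <= m)%N ->
    hn (fourier_sum e u x m - fourier_sum e u x n) < eps.
  exists N => m n Nm Nn; have [le_mn|/ltnW le_nm] := leqP m n.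
    by rewrite (hdistC hip) tail_lt ?Nm.
  by rewrite tail_lt ?Nn.
move=> /andP[le_Nn le_nm].
rewrite -(@ltr_pXn2r _ 2) ?nnegrE ?hnorm_ge0 ?ltW //.
apply: le_lt_trans (hnorm_fourier_sumB x le_nm) _; apply: le_lt_trans (hN m).
rewrite lerD2l lerN2 (@big_cat_nat _ _ _ N 0 n) //= lerDl.
by apply: sumr_ge0 => i _; exact: sqr_ge0.
Qed.

End FourierSum.

(* Junk value [0] if the series diverges. *)
Definition fourier (e u : nat -> V) (x : V) : V :=
  xget 0 [set l | fourier_sum e u x --> l].

Hypothesis hc : hcomplete ip.

Section FourierMap.
Variables e u : nat -> V.
Hypotheses (oe : orthonormal_seq e) (ou : orthonormal_seq u).

Lemma fourier_sum_cvg x : fourier_sum e u x --> fourier e u x.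
Proof. by apply: xgetPex; apply: hc; exact: fourier_sum_cauchy. Qed.

Lemma fourier_unique x l : fourier_sum e u x --> l -> fourier e u x = l.
Proof. exact/hcvg_unique/fourier_sum_cvg. Qed.

Lemma fourier_linear : linear (fourier e u).
Proof.
move=> a x y; apply: fourier_unique.
have := hcvgD hip (hcvgZ hip a (fourier_sum_cvg x)) (fourier_sum_cvg y).
apply: hcvg_ext => n; rewrite /fourier_sum scaler_sumr -big_split /=.
by apply: eq_bigr => i _; rewrite (ipDl hip) (ipZl hip) scalerDl scalerA.
Qed.

Lemma fourier_basis m : e m != 0 -> fourier e u (e m) = u m.
Proof.
move=> em0; apply: fourier_unique; apply: (hcvg_eventually hip (N := m.+1)) => n lt_mn.
have m_iota : m \in index_iota 0 n by rewrite mem_index_iota.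
rewrite /fourier_sum (bigD1_seq m) ?iota_uniq //= (proj1 oe) // scale1r big1 ?addr0 //.
by move=> i im; rewrite (proj2 oe) ?scale0r // eq_sym.
Qed.

Lemma fourier_in (K : set V) x : subspace K -> hclosed ip K ->
  (forall i, K (u i)) -> K (fourier e u x).
Proof.
move=> [K0 KD KZ] K_closed Ku; apply: K_closed (fourier_sum_cvg x) => n.
by apply: subspace_sum => // i; apply: KZ.
Qed.

End FourierMap.

Lemma fourier_coef_eq e e' u x y :
  orthonormal_seq e -> orthonormal_seq e' -> orthonormal_seq u ->
  (forall i, ip x (e i) = ip y (e' i)) -> fourier e u x = fourier e' u y.
Proof.
move=> oe oe' ou h; apply: fourier_unique => //.
by apply: hcvg_ext (fourier_sum_cvg oe' ou y) => n; apply: eq_bigr => i _; rewrite h.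
Qed.

Lemma fourier_adj e u x y : orthonormal_seq e -> orthonormal_seq u ->
  ip (fourier e u x) y = ip x (fourier u e y).
Proof.
move=> oe ou.
apply: (ip_hcvg_eq hip (fourier_sum_cvg oe ou x) (fourier_sum_cvg ou oe y)) => n.
rewrite (ip_suml hip) (ip_sumr hip); apply: eq_bigr => i _.
by rewrite (ipZl hip) (ipZr hip) -(ipC hip) mulrC.
Qed.

Lemma fourier_comp v w u x :
  orthonormal_seq v -> orthonormal_seq w -> orthonormal_seq u ->
  (forall m, (v m == 0) = (w m == 0)) -> fourier w u (fourier v w x) = fourier v u x.
Proof.
move=> ov ow ou vw0; apply: fourier_coef_eq => // i.
have [wi0|wi0] := eqVneq (w i) 0.
  rewrite wi0 (ip0r hip); move: (vw0 i); rewrite wi0 eqxx => /eqP->.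
  by rewrite (ip0r hip).
by rewrite fourier_adj // fourier_basis.
Qed.

End Fourier.

Lemma enum_inj_code (T : choiceType) (t0 : T) (B : set T) (code : T -> nat) :
  set_inj B code -> exists e : nat -> T,
    (forall n, e n = t0 \/ B (e n) /\ code (e n) = n) /\
    (forall b, B b -> e (code b) = b).
Proof.
move=> code_inj; exists (fun n => xget t0 [set b | B b /\ code b = n]); split.
  move=> n; case: (pselect (exists b, B b /\ code b = n)) => [ex|nex].
    by right; apply: xgetPex ex.
  by left; apply: xgetPN => b Bb; apply: nex; exists b.
move=> b Bb.
have [] := @xgetPex _ t0 [set b' | B b' /\ code b' = code b]
  (ex_intro _ b (conj Bb erefl)).
by move=> Bb' /(code_inj _ _ (mem_set Bb') (mem_set Bb)).
Qed.

Section OrthonormalBasis.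
Variables (R : realType) (V : lmodType R[i]) (ip : V -> V -> R[i]).
Hypothesis hip : inner_product ip.
Local Notation hn := (hnorm ip).

Definition orthonormal_set (K B : set V) :=
  [/\ B `<=` K, (forall b, B b -> ip b b = 1) &
      (forall b b', B b -> B b' -> b <> b' -> ip b b' = 0)].

Lemma normalize x : x != 0 -> exists2 c : R[i], c != 0 & ip (c *: x) (c *: x) = 1.
Proof.
move=> x0; have hx0 : hn x != 0 by apply: contra_neq x0; exact: hnorm0_eq0.
exists (hn x)^-1%:C.
  by apply: contra_neq hx0 => /complexI/eqP; rewrite invr_eq0 => /eqP.
rewrite (ipZl hip) (ipZr hip) conj_real (ip_hnorm hip) -!realcM.
by rewrite mulrA -expr2 -exprMn mulVf // expr1n.
Qed.

Lemma orthonormal_basis_exists (K : set V) : subspace K ->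
  exists B, orthonormal_basis ip K B.
Proof.
move=> [_ _ KZ].
have [|B [[BK B1 B0] B_max]] := @Zorn_bigcup _ (orthonormal_set K).
  move=> F F_on F_total; split.
  - by move=> x [X FX Xx]; case: (F_on X FX) => + _ _; apply.
  - by move=> b [X FX Xb]; case: (F_on X FX) => _ + _; apply.
  - move=> b b' [X FX Xb] [Y FY Yb']; case: (F_total X Y FX FY) => [XY|YX].
      by case: (F_on Y FY) => _ _; apply => //; apply: XY.
    by case: (F_on X FX) => _ _; apply => //; apply: YX.
exists B; split => // x Kx xB; apply/eqP/negPn/negP => x0.
have [c c0 cx1] := normalize x0.
have cxB : ~ B (c *: x).
  move=> /xB cx0; move: cx1; rewrite (ipZl hip) cx0 mulr0 => /eqP.
  by rewrite eq_sym oner_eq0.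
apply: (B_max (B `|` [set c *: x])).
  by split; [exact: subsetUl | move=> /(_ (c *: x) (or_intror erefl))].
split.
- by move=> y [/BK // | ->]; apply: KZ.
- by move=> y [/B1 // | ->].
- move=> b b' [Bb | ->] [Bb' | ->] neq; [exact: B0 | | | by []].
  + by rewrite (ipZr hip) [ip b x](ipC hip) xB // conjC0 mulr0.
  + by rewrite (ipZl hip) xB // mulr0.
Qed.

Definition orthonormal_enum (e : nat -> V) (B : set V) :=
  [/\ orthonormal_seq ip e, (forall n, e n != 0 -> B (e n)) &
      (forall b, B b -> exists n, e n = b)].

Lemma orthonormal_code (K B : set V) : hseparable ip -> orthonormal_set K B ->
  exists code : V -> nat, set_inj B code.
Proof.
move=> [d d_dense] [_ B1 B0].
have half_gt0 : (0 : R) < 2^-1 by rewrite invr_gt0.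
pose code b := xget 0%N [set n | hn (b - d n) < 2^-1].
have codeP b : hn (b - d (code b)) < 2^-1.
  by apply: (@xgetPex _ 0%N [set n | hn (b - d n) < 2^-1]); exact: d_dense.
(* Distinct basis vectors are at distance sqrt 2, so they cannot lie within 1/2
   of the same point of [d]. *)
exists code => b b' /set_mem Bb /set_mem Bb' eq_code.
case: (eqVneq b b') => // /eqP neq; exfalso.
have : hn (b - b') ^+ 2 = 2.
  rewrite (hnormD_sqr hip) (hnormN hip) !(hnorm_sqr hip) (ipNr hip) B1 // B1 //.
  by rewrite B0 // oppr0 /= mul0rn addr0.
have : hn (b - b') < 1.
  apply: le_lt_trans (ler_hdistD hip b (d (code b)) b') _.
  have := codeP b; have := codeP b'; rewrite eq_code (hdistC hip (d _)); lra.
have := hnorm_ge0 ip (b - b'); nra.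
Qed.

Lemma orthonormal_basis_enum (K B : set V) : hseparable ip ->
  orthonormal_basis ip K B -> exists e, orthonormal_enum e B.
Proof.
move=> sep [BK B1 B0 _]; have [code code_inj] := orthonormal_code sep (And3 BK B1 B0).
have [e [e_spec e_code]] := enum_inj_code 0 code_inj.
exists e; split; first split.
- by move=> n; case: (e_spec n) => [->|[/B1 //]]; rewrite eqxx.
- move=> n m nm; case: (e_spec n) => [->|[Bn cn]]; first by rewrite (ip0l hip).
  case: (e_spec m) => [->|[Bm cm]]; first by rewrite (ip0r hip).
  by apply: B0 => // enm; move: nm; rewrite -cn -cm enm eqxx.
- by move=> n; case: (e_spec n) => [->|[]//]; rewrite eqxx.
- by move=> b Bb; exists (code b); apply: e_code.
Qed.

End OrthonormalBasis.

Section Projection.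
Variables (R : realType) (V : lmodType R[i]) (ip : V -> V -> R[i]).
Hypothesis hip : inner_product ip.
Local Notation hn := (hnorm ip).

Definition selfadjoint (T : V -> V) := forall x y, ip (T x) y = ip x (T y).

Definition is_proj_onto (K : set V) (p : V -> V) :=
  [/\ linear p, (forall x, K (p x)), (forall y, K y -> p y = y) & selfadjoint p].

Lemma fourier_proj (K B : set V) e : hcomplete ip -> subspace K -> hclosed ip K ->
  orthonormal_basis ip K B -> orthonormal_enum ip e B -> is_proj_onto K (fourier ip e e).
Proof.
move=> hc sK K_closed [BK B1 _ B_max] [oe eB Be].
have Ke i : K (e i) by have [->|/eB/BK //] := eqVneq (e i) 0; case: sK.
split=> [||y Ky|x y]; [exact: fourier_linear | by move=> x; apply: fourier_in |
  | exact: fourier_adj].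
apply/subr0_eq/B_max; first by apply: subspaceB => //; apply: fourier_in.
move=> b Bb; have [m em_b] := Be b Bb.
have b0 : b != 0.
  apply/eqP => b0; move: (B1 _ Bb); rewrite b0 (ip0l hip) => /eqP.
  by rewrite eq_sym oner_eq0.
by rewrite -em_b (ipBl hip) fourier_adj // fourier_basis ?em_b // subrr.
Qed.

Lemma proj_exists (K : set V) : hcomplete ip -> hseparable ip ->
  subspace K -> hclosed ip K -> exists p, is_proj_onto K p.
Proof.
move=> hc sep sK K_closed; have [B onbB] := orthonormal_basis_exists hip sK.
have [e eB] := orthonormal_basis_enum hip sep onbB.
by exists (fourier ip e e); apply: fourier_proj onbB eB.
Qed.

Section ProjOnto.
Variables (K : set V) (p : V -> V).
Hypothesis pK : is_proj_onto K p.

Lemma proj_idem x : p (p x) = p x.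
Proof. by case: pK => _ inK idK _; apply: idK. Qed.

Variable T : V -> V.
Hypothesis Tsa : selfadjoint T.

Lemma proj_comm_fix x : (forall y, K y -> T y = y) -> p (T x) = p x.
Proof.
case: pK => _ inK _ psa TK; apply: (ipl_inj hip) => z.
by rewrite psa Tsa TK // -psa.
Qed.

Lemma proj_comm_ker x : (forall y, K y -> T y = 0) -> p (T x) = 0.
Proof.
case: pK => _ inK _ psa TK; apply: (ipl_inj hip) => z.
by rewrite psa Tsa TK // (ip0r hip) (ip0l hip).
Qed.

End ProjOnto.

Lemma orth_proj_linear T : orth_proj ip T -> linear T.
Proof. by case=> [[]]. Qed.

Lemma orth_projP T : linear T -> (forall x, T (T x) = T x) -> selfadjoint T ->
  orth_proj ip T.
Proof.
move=> lT T_idem Tsa; split=> //; split=> //; exists 1 => x; rewrite mul1r.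
have h : hn (T x) ^+ 2 <= hn x * hn (T x).
  by rewrite (hnorm_sqr hip) Tsa T_idem; exact: Re_ip_le.
have [->|Tx0] := eqVneq (hn (T x)) 0; first exact: hnorm_ge0.
by move: h; rewrite expr2 ler_pM2r // lt_def Tx0 hnorm_ge0.
Qed.

End Projection.

Section Forward.
Variables (R : realType) (V : lmodType R[i]) (ip : V -> V -> R[i]).
Hypothesis hip : inner_product ip.

Lemma Ksub_proj P Q : orth_proj ip P -> Ksub P Q = [set x | P x = x /\ Q x = 0].
Proof.
move=> [_ P_idem _]; apply/seteqP; split=> x /=.
  by case=> [[y <-] Qx]; rewrite P_idem.
by case=> Px Qx; split=> //; exists x.
Qed.

Lemma Ksub_compl_proj P Q : orth_proj ip P ->
  Ksub (compl_op P) (compl_op Q) = [set x | P x = 0 /\ Q x = x].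
Proof.
move=> [[lP _] P_idem _]; apply/seteqP; rewrite /compl_op; split=> x /=.
  by case=> [[y <-] /subr0_eq Qx]; rewrite linB // P_idem subrr.
by case=> Px Qx; split; [exists x; rewrite Px subr0 | rewrite Qx subrr].
Qed.

Definition Ktrivial (P Q : V -> V) :=
  Ksub P Q = [set 0] /\ Ksub (compl_op P) (compl_op Q) = [set 0].

Lemma subspace_eq2 (T1 T2 S1 S2 : V -> V) : linear T1 -> linear T2 ->
  linear S1 -> linear S2 -> subspace [set x | T1 x = T2 x /\ S1 x = S2 x].
Proof. by move=> *; apply: subspaceI; apply: subspace_eq. Qed.

Lemma hclosed_eq2 (T1 T2 S1 S2 : V -> V) : bounded_linear ip T1 -> bounded_linear ip T2 ->
  bounded_linear ip S1 -> bounded_linear ip S2 ->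
  hclosed ip [set x | T1 x = T2 x /\ S1 x = S2 x].
Proof. by move=> *; apply: hclosedI; apply: hclosed_eq. Qed.

Lemma unitary_orthonormal_basis U Ui (K K' B : set V) :
  unitary_with_inverse ip U Ui -> (forall x, K x -> K' (U x)) ->
  (forall y, K' y -> K (Ui y)) -> orthonormal_basis ip K B ->
  orthonormal_basis ip K' (U @` B).
Proof.
move=> [[lU _] Uip UK KU] UK' UiK [BK B1 B0 B_max]; split.
- by move=> _ [b Bb <-]; apply/UK'/BK.
- by move=> _ [b Bb <-]; rewrite Uip B1.
- move=> _ _ [b Bb <-] [b' Bb' <-] neq; rewrite Uip B0 // => eq_b.
  by apply: neq; rewrite eq_b.
- move=> y K'y y_orth; have Uiy0 : Ui y = 0.
    apply: B_max (UiK _ K'y) _ => b Bb.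
    by rewrite -Uip KU; apply: y_orth; exists b.
  by rewrite -[y]KU Uiy0 lin0.
Qed.

Lemma swappable_same_dim P Q : orth_proj ip P -> orth_proj ip Q ->
  unitarily_swappable ip P Q ->
  same_hilbert_dim ip (Ksub P Q) (Ksub (compl_op P) (compl_op Q)).
Proof.
move=> oP oQ [U [Ui [uU UP UQ]]]; case: (uU) => [[lU _] _ UK KU].
have Ui0 : Ui 0 = 0 by rewrite -{1}(lin0 lU) UK.
have UiP y : Ui (P y) = Q (Ui y) by rewrite -UQ UK.
have UiQ y : Ui (Q y) = P (Ui y) by rewrite -UP UK.
have [lP lQ] := (orth_proj_linear oP, orth_proj_linear oQ).
have [B onbB] : exists B, orthonormal_basis ip (Ksub P Q) B.
  apply: orthonormal_basis_exists => //; rewrite Ksub_proj //.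
  by apply: subspace_eq2 => // a x y; rewrite scaler0 addr0.
exists B, (U @` B); split => //; last first.
  rewrite card_eq_sym; apply: inj_card_eq => x y _ _.
  by move=> /(congr1 Ui); rewrite !UK.
apply: unitary_orthonormal_basis uU _ _ onbB; rewrite Ksub_compl_proj // Ksub_proj //.
  by move=> x [Px Qx]; split; [rewrite -UQ UK Qx lin0 | rewrite -UP UK Px].
by move=> y [Py Qy]; split; [rewrite -UiQ Qy | rewrite -UiP Py].
Qed.

End Forward.

Section Reduction.
Variables (R : realType) (V : lmodType R[i]) (ip : V -> V -> R[i]).
Hypothesis hip : inner_product ip.
Variables (pF S : V -> V).
Hypotheses (lF : linear pF) (pF_idem : forall x, pF (pF x) = pF x)
  (pF_sa : selfadjoint ip pF).

Definition patch (T : V -> V) (x : V) : V := T (x - pF x) + pF x.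

Lemma compl_linear : linear (fun x => x - pF x).
Proof. by move=> a x y; rewrite lF scalerBr opprD addrACA. Qed.

Lemma pF_compl x : pF (x - pF x) = 0.
Proof. by rewrite linB // pF_idem subrr. Qed.

Lemma compl_sa x y : ip (x - pF x) y = ip x (y - pF y).
Proof. by rewrite (ipBl hip) (ipBr hip) pF_sa. Qed.

Section Patch.
Variable T : V -> V.
Hypotheses (oT : orth_proj ip T) (TF : forall x, T (pF x) = pF (T x)).

Let lT := orth_proj_linear oT.

Lemma comm_compl x : T (x - pF x) = T x - pF (T x).
Proof. by rewrite (linB lT) TF. Qed.

Lemma pF_patch x : pF (patch T x) = pF x.
Proof. by rewrite linD // -TF pF_compl (lin0 lT) add0r pF_idem. Qed.

Lemma patch_compl x : patch T x - pF (patch T x) = T (x - pF x).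
Proof. by rewrite pF_patch addrK. Qed.

Lemma patch_orth_proj : orth_proj ip (patch T).
Proof.
case: oT => _ T_idem T_sa; apply: (orth_projP hip) => [|x|x y].
- exact: linear_add (linear_comp lT compl_linear) lF.
- by rewrite {1}/patch patch_compl pF_patch T_idem.
- by rewrite /patch (ipDl hip) (ipDr hip) T_sa compl_sa !comm_compl pF_sa.
Qed.

Lemma patch_pF0 x : pF x = 0 -> patch T x = T x.
Proof. by rewrite /patch => ->; rewrite subr0 addr0. Qed.

Lemma patch0 : patch T 0 = 0.
Proof. by rewrite patch_pF0 ?(lin0 lT) ?(lin0 lF). Qed.

Lemma patch_id x : pF x = x -> patch T x = x.
Proof. by rewrite /patch => ->; rewrite subrr (lin0 lT) add0r. Qed.

Lemma patch_ker x : patch T x = 0 -> pF x = 0.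
Proof. by move=> Tx0; rewrite -pF_patch Tx0 (lin0 lF). Qed.

Lemma patch_fixed_compl x : patch T x = x -> T (x - pF x) = x - pF x.
Proof. by rewrite -{1}patch_compl => ->. Qed.

End Patch.

Variables (P Q : V -> V).
Hypotheses (oP : orth_proj ip P) (oQ : orth_proj ip Q).
Hypotheses (PF : forall x, P (pF x) = pF (P x)) (QF : forall x, Q (pF x) = pF (Q x)).
(* [K11F] makes [ran pF] the common fixed space of [patch P] and [patch Q]
   ([patch_fixed]), which a unitary swapping them must preserve. *)
Hypotheses (K10F : forall x, P x = x -> Q x = 0 -> pF x = x)
  (K01F : forall x, P x = 0 -> Q x = x -> pF x = x)
  (K11F : forall x, P x = x -> Q x = x -> pF x = x).

Lemma patch_fixed y : patch P y = y -> patch Q y = y -> pF y = y.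
Proof.
move=> /(patch_fixed_compl oP PF) Py /(patch_fixed_compl oQ QF) Qy.
by have := K11F Py Qy; rewrite pF_compl => /esym/subr0_eq {2}->.
Qed.

Lemma patch_Ktrivial : Ktrivial (patch P) (patch Q).
Proof.
have oP' := patch_orth_proj oP PF.
rewrite /Ktrivial (Ksub_proj _ oP') (Ksub_compl_proj _ oP').
split; apply/seteqP; split=> x /=; try by move=> ->; rewrite (patch0 oP) (patch0 oQ).
- move=> [Px Qx]; have x_ker := patch_ker oQ QF Qx.
  by rewrite !patch_pF0 // in Px Qx; rewrite -(K10F Px Qx) x_ker.
- move=> [Px Qx]; have x_ker := patch_ker oP PF Px.
  by rewrite !patch_pF0 // in Px Qx; rewrite -(K01F Px Qx) x_ker.
Qed.

Lemma isometry_ker (X Y : V -> V) :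
  (forall x y, ip (X x) (X y) = ip x y) -> cancel Y X ->
  (forall y, pF y = y -> pF (Y y) = Y y) -> forall x, pF x = 0 -> pF (X x) = 0.
Proof.
move=> X_iso YK Y_fix x x_ker; apply: (ip_eq0 hip); set z := pF (X x).
have z_fix : pF z = z by rewrite pF_idem.
by rewrite {1}/z pF_sa z_fix -{1}(YK z) X_iso -(Y_fix _ z_fix) -pF_sa x_ker (ip0l hip).
Qed.

Hypotheses (lS : linear S) (S_sa : selfadjoint ip S) (SS : forall x, S (S x) = pF x)
  (SF : forall x, S (pF x) = S x) (SPS : forall x, S (P (S x)) = Q (pF x)).

Lemma pF_S x : pF (S x) = S x.
Proof. by rewrite -SS [S (S x)]SS SF. Qed.

Lemma S_ker x : pF x = 0 -> S x = 0.
Proof. by rewrite -SF => ->; rewrite (lin0 lS). Qed.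

Lemma SQS x : S (Q (S x)) = P (pF x).
Proof. by rewrite -{1}[S x]pF_S -SPS SS SS -PF pF_idem. Qed.

Definition glue (X : V -> V) (x : V) : V := X (x - pF x) + S x.

Section Glue.
Variables X Y : V -> V.
Hypotheses (lX : linear X) (X_ker : forall x, pF x = 0 -> pF (X x) = 0).

Lemma pF_glue x : pF (glue X x) = S x.
Proof. by rewrite linD // X_ker ?pF_compl // add0r pF_S. Qed.

Lemma compl_glue x : glue X x - pF (glue X x) = X (x - pF x).
Proof. by rewrite pF_glue addrK. Qed.

Lemma glueK : cancel X Y -> cancel (glue X) (glue Y).
Proof.
move=> XK x; rewrite /glue compl_glue XK linD // SS S_ker ?X_ker ?pF_compl //.
by rewrite add0r subrK.
Qed.

Lemma glue_isometry : (forall x y, ip (X x) (X y) = ip x y) ->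
  forall x y, ip (glue X x) (glue X y) = ip x y.
Proof.
move=> X_iso x y.
have cross u v : ip (X (u - pF u)) (S v) = 0.
  by rewrite -pF_S -pF_sa X_ker ?pF_compl // (ip0l hip).
rewrite /glue (ipDl hip) !(ipDr hip) X_iso cross [ip (S x) _](ipC hip) cross conjC0.
by rewrite S_sa SS addr0 add0r compl_sa pF_compl subr0 -(ipDr hip) subrK.
Qed.

Lemma glue_linear : linear (glue X).
Proof. exact: linear_add (linear_comp lX compl_linear) lS. Qed.

End Glue.

Section Swap.
Variables W Wi : V -> V.
Hypotheses (uW : unitary_with_inverse ip W Wi)
  (WP : forall x, W (patch P (Wi x)) = patch Q x)
  (WQ : forall x, W (patch Q (Wi x)) = patch P x).

Let lW : linear W. Proof. by case: uW => [[]]. Qed.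
Let W_iso : forall x y, ip (W x) (W y) = ip x y. Proof. by case: uW. Qed.
Let WK : cancel W Wi. Proof. by case: uW. Qed.
Let KW : cancel Wi W. Proof. by case: uW. Qed.

Let Wi_iso x y : ip (Wi x) (Wi y) = ip x y.
Proof. by rewrite -W_iso !KW. Qed.

Let W_fix y : pF y = y -> pF (W y) = W y.
Proof.
move=> y_fix; apply: patch_fixed.
  by rewrite -WQ WK (patch_id oQ y_fix).
by rewrite -WP WK (patch_id oP y_fix).
Qed.

Let Wi_fix y : pF y = y -> pF (Wi y) = Wi y.
Proof.
move=> y_fix; apply: patch_fixed; apply: (can_inj WK).
  by rewrite WP KW (patch_id oQ y_fix).
by rewrite WQ KW (patch_id oP y_fix).
Qed.

Let W_ker := isometry_ker W_iso KW Wi_fix.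
Let Wi_ker := isometry_ker Wi_iso WK W_fix.

Lemma glue_conj (T1 T2 : V -> V) : orth_proj ip T1 -> orth_proj ip T2 ->
  (forall x, T1 (pF x) = pF (T1 x)) ->
  (forall x, W (patch T1 (Wi x)) = patch T2 x) ->
  (forall x, S (T1 (S x)) = T2 (pF x)) ->
  forall x, glue W (T1 (glue Wi x)) = T2 x.
Proof.
move=> oT1 oT2 T1F WT T1S x.
rewrite /glue -(comm_compl oT1 T1F) (compl_glue Wi_ker).
rewrite -(patch_pF0 T1 (Wi_ker (pF_compl x))) WT (patch_pF0 T2 (pF_compl x)).
by rewrite -SF -T1F (pF_glue Wi_ker) T1S -(linD (orth_proj_linear oT2)) subrK.
Qed.

Lemma glue_swappable : unitarily_swappable ip P Q.
Proof.
exists (glue W), (glue Wi); split; last 2 first.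
- exact: glue_conj oP oQ PF WP SPS.
- exact: glue_conj oQ oP QF WQ SQS.
split; [split | | |].
- exact: glue_linear lW.
- by exists 1 => x; rewrite mul1r /hnorm (glue_isometry W_ker).
- exact: glue_isometry W_ker W_iso.
- exact: glueK W_ker WK.
- exact: glueK Wi_ker KW.
Qed.

End Swap.

Lemma swappable_of_patch :
  unitarily_swappable ip (patch P) (patch Q) -> unitarily_swappable ip P Q.
Proof. by move=> [W [Wi [uW WP WQ]]]; exact: glue_swappable uW WP WQ. Qed.

End Reduction.

Section Blocks.
Variables (R : realType) (V : lmodType R[i]) (ip : V -> V -> R[i]).
Hypothesis hip : inner_product ip.
Variables (P Q : V -> V).
Hypotheses (oP : orth_proj ip P) (oQ : orth_proj ip Q).

Local Notation K10 := [set x | P x = x /\ Q x = 0].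
Local Notation K01 := [set x | P x = 0 /\ Q x = x].
Local Notation K11 := [set x | P x = x /\ Q x = x].

Let lP := orth_proj_linear oP.
Let lQ := orth_proj_linear oQ.
Let P_sa : selfadjoint ip P. Proof. by case: oP. Qed.
Let Q_sa : selfadjoint ip Q. Proof. by case: oQ. Qed.

Variables (pA pB pE T T' : V -> V).
Hypotheses (pA_proj : is_proj_onto ip K10 pA) (pB_proj : is_proj_onto ip K01 pB)
  (pE_proj : is_proj_onto ip K11 pE).
Hypotheses (lT : linear T) (lT' : linear T')
  (T_adj : forall x y, ip (T x) y = ip x (T' y))
  (T_in : forall x, K01 (T x)) (T'_in : forall x, K10 (T' x))
  (T'T : forall x, T' (T x) = pA x) (TT' : forall x, T (T' x) = pB x).

Let pF x := pA x + pB x + pE x.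
Let S x := pE x + T x + T' x.

Let pA_lin : linear pA. Proof. by case: pA_proj. Qed.
Let pB_lin : linear pB. Proof. by case: pB_proj. Qed.
Let pE_lin : linear pE. Proof. by case: pE_proj. Qed.
Let pA_in x : K10 (pA x). Proof. by case: pA_proj. Qed.
Let pB_in x : K01 (pB x). Proof. by case: pB_proj. Qed.
Let pE_in x : K11 (pE x). Proof. by case: pE_proj. Qed.

Let pA_P x : pA (P x) = pA x.
Proof. by apply: (proj_comm_fix hip pA_proj P_sa) => y []. Qed.
Let pA_Q x : pA (Q x) = 0.
Proof. by apply: (proj_comm_ker hip pA_proj Q_sa) => y []. Qed.
Let pB_P x : pB (P x) = 0.
Proof. by apply: (proj_comm_ker hip pB_proj P_sa) => y []. Qed.
Let pB_Q x : pB (Q x) = pB x.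
Proof. by apply: (proj_comm_fix hip pB_proj Q_sa) => y []. Qed.
Let pE_P x : pE (P x) = pE x.
Proof. by apply: (proj_comm_fix hip pE_proj P_sa) => y []. Qed.
Let pE_Q x : pE (Q x) = pE x.
Proof. by apply: (proj_comm_fix hip pE_proj Q_sa) => y []. Qed.

Let pA_eq0 y : Q y = y -> pA y = 0. Proof. by move=> <-; rewrite pA_Q. Qed.
Let pB_eq0 y : P y = y -> pB y = 0. Proof. by move=> <-; rewrite pB_P. Qed.
Let pE_eq0P y : P y = 0 -> pE y = 0.
Proof. by rewrite -pE_P => ->; rewrite (lin0 pE_lin). Qed.
Let pE_eq0Q y : Q y = 0 -> pE y = 0.
Proof. by rewrite -pE_Q => ->; rewrite (lin0 pE_lin). Qed.

Let pA_id y : K10 y -> pA y = y. Proof. by case: pA_proj => _ _ + _; apply. Qed.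
Let pB_id y : K01 y -> pB y = y. Proof. by case: pB_proj => _ _ + _; apply. Qed.
Let pE_id y : K11 y -> pE y = y. Proof. by case: pE_proj => _ _ + _; apply. Qed.

Let T_pA x : T (pA x) = T x. Proof. by rewrite -T'T TT' pB_id. Qed.
Let T'_pB x : T' (pB x) = T' x. Proof. by rewrite -TT' T'T pA_id. Qed.
Let T_eq0 y : pA y = 0 -> T y = 0.
Proof. by rewrite -T_pA => ->; rewrite (lin0 lT). Qed.
Let T'_eq0 y : pB y = 0 -> T' y = 0.
Proof. by rewrite -T'_pB => ->; rewrite (lin0 lT'). Qed.

Let T'_adj x y : ip (T' x) y = ip x (T y).
Proof. by rewrite (ipC hip) -T_adj -(ipC hip). Qed.

Let S_pA x : S (pA x) = T x.
Proof.
case: (pA_in x) => PA QA.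
by rewrite /S (pE_eq0Q QA) T_pA (T'_eq0 (pB_eq0 PA)) add0r addr0.
Qed.
Let S_pB x : S (pB x) = T' x.
Proof.
by case: (pB_in x) => PB QB; rewrite /S (pE_eq0P PB) (T_eq0 (pA_eq0 QB)) T'_pB !add0r.
Qed.
Let S_pE x : S (pE x) = pE x.
Proof.
case: (pE_in x) => PE QE.
by rewrite /S (proj_idem pE_proj) (T_eq0 (pA_eq0 QE)) (T'_eq0 (pB_eq0 PE)) !addr0.
Qed.
Let S_T x : S (T x) = pA x.
Proof.
by case: (T_in x) => PT QT; rewrite /S (pE_eq0P PT) (T_eq0 (pA_eq0 QT)) T'T !add0r.
Qed.
Let S_T' x : S (T' x) = pB x.
Proof.
by case: (T'_in x) => PT QT; rewrite /S (pE_eq0Q QT) TT' (T'_eq0 (pB_eq0 PT)) add0r addr0.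
Qed.

Let lF : linear pF. Proof. exact: linear_add (linear_add pA_lin pB_lin) pE_lin. Qed.
Let lS : linear S. Proof. exact: linear_add (linear_add pE_lin lT) lT'. Qed.

Let K10F y : P y = y -> Q y = 0 -> pF y = y.
Proof.
by move=> Py Qy; rewrite /pF (pA_id (conj Py Qy)) (pB_eq0 Py) (pE_eq0Q Qy) !addr0.
Qed.
Let K01F y : P y = 0 -> Q y = y -> pF y = y.
Proof.
by move=> Py Qy; rewrite /pF (pA_eq0 Qy) (pB_id (conj Py Qy)) (pE_eq0P Py) add0r addr0.
Qed.
Let K11F y : P y = y -> Q y = y -> pF y = y.
Proof.
by move=> Py Qy; rewrite /pF (pA_eq0 Qy) (pB_eq0 Py) (pE_id (conj Py Qy)) !add0r.
Qed.

Let pF_idem x : pF (pF x) = pF x.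
Proof.
case: (pA_in x) (pB_in x) (pE_in x) => PA QA [PB QB] [PE QE].
by rewrite {2}/pF !(linD lF) (K10F PA QA) (K01F PB QB) (K11F PE QE).
Qed.

Let pF_sa : selfadjoint ip pF.
Proof.
move=> x y; case: pA_proj pB_proj pE_proj => [_ _ _ A_sa] [_ _ _ B_sa] [_ _ _ E_sa].
by rewrite /pF !(ipDl hip) !(ipDr hip) A_sa B_sa E_sa.
Qed.

Let PF x : P (pF x) = pF (P x).
Proof.
case: (pA_in x) (pB_in x) (pE_in x) => PA _ [PB _] [PE _].
by rewrite /pF !(linD lP) PA PB PE pA_P pB_P pE_P.
Qed.

Let QF x : Q (pF x) = pF (Q x).
Proof.
case: (pA_in x) (pB_in x) (pE_in x) => _ QA [_ QB] [_ QE].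
by rewrite /pF !(linD lQ) QA QB QE pA_Q pB_Q pE_Q.
Qed.

Let S_sa : selfadjoint ip S.
Proof.
move=> x y; case: pE_proj => [_ _ _ E_sa].
by rewrite /S !(ipDl hip) !(ipDr hip) E_sa T_adj T'_adj addrAC.
Qed.

Let SS x : S (S x) = pF x.
Proof. by rewrite {2}/S !(linD lS) S_pE S_T S_T' [pE x + _]addrC addrAC. Qed.

Let SF x : S (pF x) = S x.
Proof. by rewrite /pF !(linD lS) S_pA S_pB S_pE addrC addrA. Qed.

Let SPS x : S (P (S x)) = Q (pF x).
Proof.
case: (pE_in x) (T_in x) (T'_in x) => PE QE [PT _] [PT' _].
case: (pA_in x) (pB_in x) => _ QA [_ QB].
rewrite {2}/S !(linD lP) PE PT PT' addr0 (linD lS) S_pE S_T'.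
by rewrite /pF !(linD lQ) QA QB QE add0r addrC.
Qed.

Lemma swappable_of_blocks :
  (forall P' Q' : V -> V, orth_proj ip P' -> orth_proj ip Q' -> Ktrivial P' Q' ->
     unitarily_swappable ip P' Q') ->
  unitarily_swappable ip P Q.
Proof.
move=> trivial_case.
apply: (swappable_of_patch hip lF pF_idem pF_sa oP oQ PF QF K11F lS S_sa SS SF SPS).
apply: trivial_case.
- exact: (patch_orth_proj hip lF pF_idem pF_sa oP PF).
- exact: (patch_orth_proj hip lF pF_idem pF_sa oQ QF).
- exact: (patch_Ktrivial hip lF pF_idem pF_sa oP oQ PF QF K10F K01F).
Qed.

End Blocks.

Lemma card_eq_set_bij (T : Type) (U : choiceType) (u0 : U) (A : set T) (B : set U) :
  (A #= B)%card -> exists f, set_bij A B f.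
Proof.
(* [pcard_eqP] needs a pointed codomain. *)
pose U' : pointedType := HB.pack U (isPointed.Build U u0).
by move=> /(@pcard_eqP T U')/bijPex.
Qed.

Section Backward.
Variables (R : realType) (V : lmodType R[i]) (ip : V -> V -> R[i]).
Hypothesis hip : inner_product ip.

Lemma orthonormal_neq0 b : ip b b = 1 -> b != 0.
Proof. by apply: contra_eq_neq => ->; rewrite (ip0l hip) eq_sym oner_neq0. Qed.

Lemma orthonormal_enum_transport (K1 K2 B1 B2 : set V) (e : nat -> V) (h : V -> V) :
  orthonormal_basis ip K1 B1 -> orthonormal_basis ip K2 B2 -> set_bij B1 B2 h ->
  orthonormal_enum ip e B1 ->
  exists f, orthonormal_enum ip f B2 /\ forall n, (e n == 0) = (f n == 0).
Proof.
move=> [_ B1_1 _ _] [_ B2_1 B2_0 _] [hB h_inj h_surj] [[e1 e0] eB Be].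
pose f n := if e n == 0 then 0 else h (e n).
have fE n : e n != 0 -> f n = h (e n) by rewrite /f => /negbTE->.
have fB n : e n != 0 -> B2 (f n) by move=> en0; rewrite fE //; apply/hB/eB.
have ef0 n : (e n == 0) = (f n == 0).
  have [en0|en0] := eqVneq (e n) 0; first by rewrite /f en0 eqxx /= eqxx.
  by rewrite (negbTE (orthonormal_neq0 (B2_1 _ (fB _ en0)))).
have f_neq0 n : f n != 0 -> e n != 0 by rewrite ef0.
exists f; split=> //; split; first split.
- by move=> n /f_neq0 /fB /B2_1.
- move=> n m nm; have [fn0|/f_neq0 en0] := eqVneq (f n) 0.
    by rewrite fn0 (ip0l hip).
  have [fm0|/f_neq0 em0] := eqVneq (f m) 0; first by rewrite fm0 (ip0r hip).
  apply: B2_0; [exact: fB | exact: fB |]; rewrite !fE // => h_eq.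
  have eq_nm : e n = e m by apply: h_inj h_eq; apply/mem_set/eB.
  by move: (e0 _ _ nm); rewrite eq_nm (e1 _ em0) => /eqP; rewrite oner_eq0.
- by move=> n /f_neq0; apply: fB.
- move=> b /h_surj[a Ba <-]; have [n ena] := Be a Ba.
  by exists n; rewrite fE ena //; apply/orthonormal_neq0/B1_1.
Qed.

Lemma same_dim_swappable P Q : hcomplete ip -> hseparable ip ->
  orth_proj ip P -> orth_proj ip Q ->
  (forall P' Q' : V -> V, orth_proj ip P' -> orth_proj ip Q' -> Ktrivial P' Q' ->
     unitarily_swappable ip P' Q') ->
  same_hilbert_dim ip (Ksub P Q) (Ksub (compl_op P) (compl_op Q)) ->
  unitarily_swappable ip P Q.
Proof.
move=> hc hsep oP oQ trivial_case [B1 [B2 [onb1 onb2 /(card_eq_set_bij 0)[h bij_h]]]].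
rewrite (Ksub_proj Q oP) in onb1; rewrite (Ksub_compl_proj Q oP) in onb2.
have [bP _ _] := oP; have [bQ _ _] := oQ.
have bid := bounded_linear_id ip; have b0 := bounded_linear0 hip.
case: (bP) (bQ) (bid) (b0) => lP _ [lQ _] [lid _] [l0 _].
have [e eB1] := orthonormal_basis_enum hip hsep onb1.
have [f [fB2 ef0]] := orthonormal_enum_transport onb1 onb2 bij_h eB1.
case: (eB1) (fB2) (onb1) (onb2) => e_on eB _ [f_on fB _] [B1K _ _ _] [B2K _ _ _].
have sK10 := subspace_eq2 lP lid lQ l0; have cK10 := hclosed_eq2 hip bP bid bQ b0.
have sK01 := subspace_eq2 lP l0 lQ lid; have cK01 := hclosed_eq2 hip bP b0 bQ bid.
have sK11 := subspace_eq2 lP lid lQ lid; have cK11 := hclosed_eq2 hip bP bid bQ bid.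
have [pE pE_proj] := proj_exists hip hc hsep sK11 cK11.
have Ke i : P (e i) = e i /\ Q (e i) = 0.
  by have [->|/eB/B1K //] := eqVneq (e i) 0; case: sK10.
have Kf i : P (f i) = 0 /\ Q (f i) = f i.
  by have [->|/fB/B2K //] := eqVneq (f i) 0; case: sK01.
apply: (swappable_of_blocks hip oP oQ (fourier_proj hip hc sK10 cK10 onb1 eB1)
  (fourier_proj hip hc sK01 cK01 onb2 fB2) pE_proj
  (T := fourier ip e f) (T' := fourier ip f e)) => //.
- exact: (fourier_linear hip hc e_on f_on).
- exact: (fourier_linear hip hc f_on e_on).
- by move=> x y; apply: fourier_adj.
- by move=> x; apply: fourier_in.
- by move=> x; apply: fourier_in.
- by move=> x; apply: fourier_comp.
- by move=> x; apply: fourier_comp => // n; rewrite ef0.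
Qed.

End Backward.

Unset Implicit Arguments.
Theorem lemma4 (R : realType) :
  (forall (V' : lmodType R[i]) (ip' : V' -> V' -> R[i]) (P' Q' : V' -> V'),
      separable_hilbert_space ip' -> orth_proj ip' P' -> orth_proj ip' Q' ->
      Ksub P' Q' = [set (0 : V')%R]%classic -> Ksub (compl_op P') (compl_op Q') = [set (0 : V')%R]%classic ->
      unitarily_swappable ip' P' Q') ->
  forall (V : lmodType R[i]) (ip : V -> V -> R[i]) (P Q : V -> V),
    separable_hilbert_space ip -> orth_proj ip P -> orth_proj ip Q ->
    (unitarily_swappable ip P Q <->
     same_hilbert_dim ip (Ksub P Q) (Ksub (compl_op P) (compl_op Q))).
Proof.
move=> trivial_case V ip P Q sep_ip oP oQ; have [hip hc hsep] := sep_ip.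
split; first exact: swappable_same_dim.
by apply: same_dim_swappable => // P' Q' oP' oQ' [K1 K2]; apply: trivial_case.
Qed.
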